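(* Let $m\ge t\ge 0$ be integers and let $\mathcal{D}_{test}$ be a finite test set. For each $\mathcal{J}\subseteq\{1,\dots,m\}$ with $|\mathcal{J}|=t$, let $A(\mathcal{J})$ be the fraction of test pairs $(\mathbf{c}_{test},y_{test})\in\mathcal{D}_{test}$ such that the clean ensemble prediction $y$ equals $y_{test}$ and $$N_y-\sum_{j\in\mathcal{J}}\mathbb{I}(p_j=y)\ge\max_{l\neq y}\Bigl(N_l+\mathbb{I}(y>l)+\sum_{j\in\mathcal{J}}\mathbb{I}(p_j\neq l)\Bigr),$$ where $p_j$ are the clean base predictions for $\mathbf{c}_{test}$ and $N_l$ the clean vote counts. Suppose an attack changes base predictions only for indices in a fixed set $\mathcal{J}_0$ with $|\mathcal{J}_0|\le t$, the same for all test points. Then the accuracy of the attacked ensemble on the attacked test set is at least $\min_{|\mathcal{J}|=t}A(\mathcal{J})$.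
   Context: Setting (ConceptGuard): concepts partitioned into $m$ disjoint groups; base classifier $f^j$ trained on group $j$; clean base predictions $p_j=f^j(\mathcal{G}^j(\mathbf{c}_{test});\mathcal{D}(\phi))$, clean vote counts $N_l=\sum_j\mathbb{I}(p_j=l)$, ensemble prediction $\arg\max_l N_l$ with ties broken toward the smallest label. An attack that ''changes base predictions only for indices in $\mathcal{J}_0$'' means the post-attack base predictions equal the clean ones for $j\notin\mathcal{J}_0$. $\mathbb{I}$ is the indicator function. *)

From HB Require Import structures.
From mathcomp Require Import all_boot all_order all_algebra.
Set Implicit Arguments. Unset Strict Implicit. Unset Printing Implicit Defensive.
Import Order.TTheory GRing.Theory Num.Theory.

Definition votes (m k : nat) (p : 'I_m -> 'I_k.+1) (l : 'I_k.+1) : nat :=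
  #|[set j | p j == l]|.

(* ensemble prediction: argmax_l N_l, ties broken toward the smallest label.
   Specified as the unique label l that maximizes the votes and strictly beats
   every smaller label (such a label always exists; ord0 is a dummy default). *)
Definition ensemble (m k : nat) (p : 'I_m -> 'I_k.+1) : 'I_k.+1 :=
  odflt ord0 [pick l | [forall l', votes p l' <= votes p l]
                       && [forall l' : 'I_k.+1, (l' < l)%N ==> (votes p l' < votes p l)]].

Definition certified (m k : nat) (p : 'I_m -> 'I_k.+1) (J : {set 'I_m}) : bool :=
  let y := ensemble p in
  (votes p y - #|[set j in J | p j == y]|
     >= \max_(l | l != y) (votes p l + ((l : nat) < y)%N + #|[set j in J | p j != l]|))%N.

(* A(J): fraction of test points (indexed by 'I_n, with clean base predictions
   p i and true label y i) that are correctly classified and certified for J. *)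
Definition A_frac (n m k : nat) (p : 'I_n -> 'I_m -> 'I_k.+1) (y : 'I_n -> 'I_k.+1)
  (J : {set 'I_m}) : rat :=
  (#|[set i | (ensemble (p i) == y i) && certified (p i) J]|)%:R / n%:R.

Definition accuracy (n m k : nat) (q : 'I_n -> 'I_m -> 'I_k.+1) (y : 'I_n -> 'I_k.+1) : rat :=
  (#|[set i | ensemble (q i) == y i]|)%:R / n%:R.

From HB Require Import structures.
From mathcomp Require Import all_boot all_order all_algebra.
From mathcomp Require Import zify.
Import Order.TTheory GRing.Theory Num.Theory.

(* Changing the base predictions indexed by J can lower the vote count of the
   clean winner y by at most the number of votes in J for y, and raise the count
   of any other label l by at most the number of votes in J not for l; the
   certification condition says that y keeps its (tie-break adjusted) lead even
   then.  An attack touching only J0 touches only any J containing J0, and J0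
   extends to such a J of size t, so every test point counted in A(J) is still
   classified correctly after the attack. *)

Lemma exists_superset_card (T : finType) (A : {set T}) (t : nat) :
  (#|A| <= t <= #|T|)%N -> exists2 B : {set T}, A \subset B & #|B| = t.
Proof.
case/andP=> leAt letT.
have /card_geqP[s [s_uniq s_size sAC]] : (t - #|A| <= #|~: A|)%N.
  by have := cardsC A; lia.
exists (A :|: [set x in s]); first exact: subsetUl.
have disjAs : A :&: [set x in s] = set0.
  by apply/setP=> x; rewrite !inE; apply/negbTE/andP=> -[xA /sAC]; rewrite inE xA.
by rewrite cardsU disjAs cards0 subn0 cardsE (card_uniqP s_uniq) s_size; lia.
Qed.

Section EnsembleStability.

Variables m k : nat.
Implicit Types (l : 'I_k.+1).

Lemma ensemble_eq (p : 'I_m -> 'I_k.+1) l :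
  (forall l', votes p l' <= votes p l)%N ->
  (forall l', (l' < l)%N -> votes p l' < votes p l)%N ->
  ensemble p = l.
Proof.
move=> l_max l_first; rewrite /ensemble; case: pickP => [l' | /(_ l)].
  case/andP=> /forallP l'_max /forallP l'_first.
  have votes_eq : votes p l' = votes p l by apply/eqP; rewrite eqn_leq l_max l'_max.
  case: (ltngtP l' l) => [lt_l'l | lt_ll' | /val_inj //].
  - by have := l_first _ lt_l'l; rewrite votes_eq ltnn.
  - by have := implyP (l'_first l) lt_ll'; rewrite votes_eq ltnn.
have -> : [forall l', votes p l' <= votes p l] by apply/forallP.
have -> // : [forall l' : 'I_k.+1, (l' < l)%N ==> (votes p l' < votes p l)%N].
by apply/forallP=> l'; apply/implyP; apply: l_first.
Qed.

Variables (p q : 'I_m -> 'I_k.+1) (J : {set 'I_m}).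
Hypothesis q_eq_p : forall j, j \notin J -> q j = p j.

Lemma votes_changed_ge l :
  (votes p l - #|[set j in J | p j == l]| <= votes q l)%N.
Proof.
rewrite leq_subLR /votes; apply: leq_trans (leq_card_setU _ _).
apply/subset_leq_card/subsetP=> j; rewrite !inE => /eqP pj_l.
by case: (boolP (j \in J)) => [|/q_eq_p ->]; rewrite /= pj_l eqxx ?orbT.
Qed.

Lemma votes_changed_le l :
  (votes q l <= votes p l + #|[set j in J | p j != l]|)%N.
Proof.
rewrite /votes; apply: leq_trans (leq_card_setU _ _).
apply/subset_leq_card/subsetP=> j; rewrite !inE => /eqP qj_l.
case: (boolP (j \in J)) => [_ | /q_eq_p <-]; last by rewrite qj_l eqxx.
by case: (p j == l).
Qed.

Lemma certified_ensemble : certified p J -> ensemble q = ensemble p.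
Proof.
rewrite /certified; set y := ensemble p => /bigmax_leqP certJ.
have lead l : l != y -> (votes q l + (l < y)%N <= votes q y)%N.
  move=> l_ne_y; apply: leq_trans (votes_changed_ge y).
  apply: leq_trans (certJ l l_ne_y).
  by rewrite addnAC leq_add2r votes_changed_le.
apply: ensemble_eq => [l | l lt_ly].
  by case: (eqVneq l y) => [-> // | /lead]; apply: leq_trans; apply: leq_addr.
by have := lead l; rewrite neq_ltn lt_ly addn1 => /(_ isT).
Qed.

End EnsembleStability.

Local Open Scope ring_scope.

Theorem mainTheorem4 (n m k t : nat) (htm : (t <= m)%N)
  (p : 'I_n -> 'I_m -> 'I_k.+1) (y : 'I_n -> 'I_k.+1)
  (q : 'I_n -> 'I_m -> 'I_k.+1) (J0 : {set 'I_m})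
  (hJ0 : (#|J0| <= t)%N)
  (hq : forall (i : 'I_n) (j : 'I_m), j \notin J0 -> q i j = p i j) :
  exists J : {set 'I_m}, #|J| = t /\ A_frac p y J <= accuracy q y.
Proof.
have [J sJ0J cardJ] : exists2 J : {set 'I_m}, J0 \subset J & #|J| = t.
  by apply: exists_superset_card; rewrite hJ0 card_ord.
exists J; split=> //.
rewrite /A_frac /accuracy ler_wpM2r ?invr_ge0 ?ler0n // ler_nat.
apply/subset_leq_card/subsetP=> i; rewrite !inE => /andP[/eqP <- certJ].
suff -> : ensemble (q i) = ensemble (p i) by [].
apply: certified_ensemble certJ => j j_notin_J.
by apply: hq; apply: contra j_notin_J; apply: (subsetP sJ0J).
Qed.
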